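(* Let $\mathcal{C}$ be a class of finite digraphs for which there is a natural number $N$ such that every disjoint edge set in every member of $\mathcal{C}$ has size at most $N$. Then $\mathcal{C}$ is well quasi-ordered under both the standard and the strong homomorphic image orderings.
   Context: A digraph is a set $D$ with a binary relation $E(D)\subseteq D\times D$ (edges; loops allowed). Edges $(a_1,b_1),\dots,(a_k,b_k)$ form a disjoint edge set if the vertices $a_1,\dots,a_k,b_1,\dots,b_k$ are all distinct. A homomorphism $\phi:D_1\to D_2$ maps edges to edges; it is strong if additionally every edge of $D_2$ between vertices of $\phi(D_1)$ is the image of an edge of $D_1$. Epimorphism = surjective homomorphism. Standard homomorphic image ordering: $A\preceq B$ iff there is an epimorphism $B\to A$; strong homomorphic image ordering: $A\preceq B$ iff there is a strong epimorphism $B\to A$. Well quasi-ordered means no infinite strictly decreasing sequence and no infinite antichain; structures considered up to isomorphism. *)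

From mathcomp Require Import all_boot.
Set Implicit Arguments. Unset Strict Implicit. Unset Printing Implicit Defensive.

(* A finite digraph, represented (up to isomorphism) on the vertex set
   'I_n = {0,...,n-1}; loops allowed. *)
Record digraph := Digraph { dsize : nat; dedge : rel 'I_dsize }.

Definition vert (D : digraph) := 'I_(dsize D).

Definition is_hom (D1 D2 : digraph) (phi : vert D1 -> vert D2) : Prop :=
  forall a b, dedge a b -> dedge (phi a) (phi b).

Definition is_strong_hom (D1 D2 : digraph) (phi : vert D1 -> vert D2) : Prop :=
  is_hom phi /\
  forall (x y : vert D2),
    (exists a, phi a = x) -> (exists b, phi b = y) -> dedge x y ->
    exists a b, [/\ phi a = x, phi b = y & dedge a b].

Definition surj (A B : Type) (f : A -> B) : Prop := forall y, exists x, f x = y.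

Definition hom_image_le (A B : digraph) : Prop :=
  exists phi : vert B -> vert A, is_hom phi /\ surj phi.

Definition strong_hom_image_le (A B : digraph) : Prop :=
  exists phi : vert B -> vert A, is_strong_hom phi /\ surj phi.

Definition disjoint_edge_set (D : digraph) (s : seq (vert D * vert D)) : Prop :=
  all (fun e => dedge e.1 e.2) s /\ uniq (map fst s ++ map snd s).

Definition wqo_on (C : digraph -> Prop) (le : digraph -> digraph -> Prop) : Prop :=
  (~ exists f : nat -> digraph,
       (forall i, C (f i)) /\
       (forall i, le (f i.+1) (f i) /\ ~ le (f i) (f i.+1)))
  /\
  (~ exists f : nat -> digraph,
       (forall i, C (f i)) /\
       (forall i j, i <> j -> ~ le (f i) (f j))).

From mathcomp Require Import all_boot zify.
From Stdlib Require Import Classical ClassicalEpsilon.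
From Stdlib Require Wf_nat.
Set Implicit Arguments. Unset Strict Implicit. Unset Printing Implicit Defensive.

(* If no disjoint edge set has more than N edges, the endpoints of a maximal
   one form a set c of at most 2N vertices meeting every non-loop edge.
   Relative to c, a vertex has a profile in a finite set (its position in c,
   its loop, its edges to and from c), and every non-loop edge is determined
   by the profiles of its endpoints.  So if every profile occurs in A at most
   as often as in B, and occurs in A whenever it occurs in B, then mapping
   each profile class of B onto that of A is a strong epimorphism B -> A.
   Dickson's lemma on the profile counts therefore finds, in any sequence,
   i < j with f i a strong image of f j.  Descending chains are excluded by
   the rank |V|^3 + (|V|^2 - |E|): an epimorphism B -> A gives |A| <= |B|,
   and if |A| = |B| it is a bijection with |E B| <= |E A| whose inverse is a
   strong epimorphism in case of equality. *)

Definition chain_subseq (A : Type) (R : A -> A -> Prop) :=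
  forall f : nat -> A, exists g : nat -> nat,
    {homo g : i j / i < j} /\ forall i j, i < j -> R (f (g i)) (f (g j)).

Lemma cofinal_subseq (P : nat -> Prop) :
  (forall n, exists j, n <= j /\ P j) ->
  exists g : nat -> nat, {homo g : i j / i < j} /\ forall i, P (g i).
Proof.
move=> cofinal.
pose next n := proj1_sig (constructive_indefinite_description _ (cofinal n)).
have nextP n : n <= next n /\ P (next n).
  by rewrite /next; case: constructive_indefinite_description => j [].
pose g := fix g i := if i is i'.+1 then next (g i').+1 else next 0.
exists g; split; last by case=> [|i]; exact: (nextP _).2.
by apply: homo_ltn => [i j k|i]; [exact: ltn_trans | exact: (nextP _).1].
Qed.

Lemma ex_least_nat (P : nat -> Prop) :
  (exists n, P n) -> exists2 n, P n & forall m, P m -> n <= m.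
Proof.
move/(Wf_nat.dec_inh_nat_subset_has_unique_least_element _ (fun n => classic (P n))).
by case=> n [[Pn least] _]; exists n => // m /least /leP.
Qed.

Lemma chain_subseq_leq : chain_subseq (fun m n : nat => m <= n).
Proof.
move=> f.
have record n : exists j, n <= j /\ forall k, j <= k -> f j <= f k.
  pose attained v := exists j, n <= j /\ f j = v.
  have [_ [j [le_nj <-]] least] : exists2 v, attained v & forall w, attained w -> v <= w.
    by apply: ex_least_nat; exists (f n), n.
  by exists j; split=> // k le_jk; apply: least; exists k; rewrite (leq_trans le_nj).
have [g [g_incr g_record]] := cofinal_subseq record.
by exists g; split=> // i j /g_incr/ltnW; apply: g_record.
Qed.

Definition leq_nz (m n : nat) := m <= n /\ (0 < m) = (0 < n).

Lemma chain_subseq_leq_nz : chain_subseq leq_nz.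
Proof.
move=> f; have [g [g_incr g_le]] := chain_subseq_leq f.
case: (classic (exists k, 0 < f (g k))) => [[k f_pos] | all_zero].
  have pos i : 0 < f (g (k + i)).
    case: i => [|i]; first by rewrite addn0.
    by apply: leq_trans f_pos (g_le _ _ _); rewrite addnS ltnS leq_addr.
  exists (fun i => g (k + i)); split=> [i j lt_ij | i j lt_ij].
    by apply: g_incr; rewrite ltn_add2l.
  by split; rewrite ?pos ?g_le ?ltn_add2l.
have zero i : f (g i) = 0.
  by case: (posnP (f (g i))) => // pos; case: all_zero; exists i.
by exists g; split=> // i j _; rewrite /leq_nz !zero.
Qed.

Lemma chain_subseq_pointwise (A : Type) (R : A -> A -> Prop) (T : finType) :
  chain_subseq R -> chain_subseq (fun u v : T -> A => forall t, R (u t) (v t)).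
Proof.
move=> chainR.
suff chain_on (ts : seq T) :
    chain_subseq (fun u v : T -> A => forall t, t \in ts -> R (u t) (v t)).
  move=> f; have [g [g_incr g_le]] := chain_on (enum T) f.
  by exists g; split=> // i j /g_le le t; apply: le; rewrite mem_enum.
elim: ts => [|t ts IH] f; first by exists id; split.
have [g1 [g1_incr g1_le]] := IH f.
have [g2 [g2_incr g2_le]] := chainR (fun i => f (g1 i) t).
exists (fun i => g1 (g2 i)); split=> [i j /g2_incr/g1_incr // | i j lt_ij u].
rewrite in_cons => /predU1P [-> | u_ts]; first exact: g2_le.
by apply: g1_le; rewrite ?g2_incr.
Qed.

Definition vertex_cover (D : digraph) (c : seq (vert D)) :=
  forall x y, dedge x y -> x != y -> (x \in c) || (y \in c).

Definition endpoints (D : digraph) (s : seq (vert D * vert D)) :=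
  map fst s ++ map snd s.

Lemma disjoint_edge_set_cons (D : digraph) (s : seq (vert D * vert D)) x y :
  disjoint_edge_set s -> dedge x y -> x != y ->
  x \notin endpoints s -> y \notin endpoints s -> disjoint_edge_set ((x, y) :: s).
Proof.
move=> [s_edges s_uniq] xy neq_xy; rewrite !mem_cat => /norP[x1 x2] /norP[y1 y2].
split; first by rewrite /= xy.
rewrite /= uniq_catC /= uniq_catC s_uniq.
by rewrite !mem_cat !in_cons !negb_or neq_xy x1 x2 y1 y2.
Qed.

Lemma vertex_cover_of_bounded_disjoint_edges (D : digraph) (N : nat) :
  (forall s : seq (vert D * vert D), disjoint_edge_set s -> size s <= N) ->
  exists c : seq (vert D), vertex_cover c /\ size c <= N.*2.
Proof.
move=> bounded.
suff extend (s : seq (vert D * vert D)) : disjoint_edge_set s ->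
    exists c : seq (vert D), vertex_cover c /\ size c <= N.*2.
  by apply: (extend [::]); split.
have [k] := ubnP (N - size s); elim: k s => // k IH s lt_k disj_s.
case: (pickP [pred p : vert D * vert D | [&& dedge p.1 p.2, p.1 != p.2,
    p.1 \notin endpoints s & p.2 \notin endpoints s]])
  => [[x y] /and4P[xy neq_xy x_new y_new] | none].
  have disj_xys := disjoint_edge_set_cons disj_s xy neq_xy x_new y_new.
  by apply: (IH _ _ disj_xys); have /= := bounded _ disj_xys; lia.
exists (endpoints s); split.
  move=> x y xy neq_xy; move: (none (x, y)); rewrite /= xy neq_xy /=.
  by move/negbT; rewrite negb_and !negbK.
by rewrite /endpoints size_cat !size_map addnn leq_double bounded.
Qed.

Notation profile K :=
  (option 'I_K * bool * {ffun 'I_K -> bool} * {ffun 'I_K -> bool})%type.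

Section Profile.
Variables (K : nat) (D : digraph) (c : seq (vert D)).

Definition cover_pos (v : vert D) : option 'I_K :=
  if v \in c then insub (index v c) else None.

Definition vprofile (v : vert D) : profile K :=
  (cover_pos v, dedge v v,
   [ffun l : 'I_K => (l < size c) && dedge (nth v c l) v],
   [ffun l : 'I_K => (l < size c) && dedge v (nth v c l)]).

Definition count_profile (t : profile K) := #|[pred v | vprofile v == t]|.

Lemma cover_posP v l : cover_pos v = Some l -> v \in c /\ index v c = l.
Proof.
rewrite /cover_pos; case: ifP => // v_c.
by case: insubP => // u _ <- [<-].
Qed.

Lemma cover_pos_mem v : size c <= K -> v \in c -> exists l, cover_pos v = Some l.
Proof.
move=> small v_c; have lt_K : index v c < K by rewrite (leq_trans _ small) ?index_mem.
by exists (Ordinal lt_K); rewrite /cover_pos v_c insubT.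
Qed.

Lemma dedge_from_pos v w l :
  cover_pos v = Some l -> dedge v w = (vprofile w).1.2 l.
Proof. by case/cover_posP=> v_c idx; rewrite ffunE /= -idx index_mem v_c nth_index. Qed.

Lemma dedge_to_pos v w l :
  cover_pos v = Some l -> dedge w v = (vprofile w).2 l.
Proof. by case/cover_posP=> v_c idx; rewrite ffunE /= -idx index_mem v_c nth_index. Qed.

End Profile.

Lemma dedge_vprofile K (A B : digraph) (cA : seq (vert A)) (cB : seq (vert B))
    (a a' : vert A) (b b' : vert B) :
  size cA <= K ->
  vprofile K cA a = vprofile K cB b -> vprofile K cA a' = vprofile K cB b' ->
  (a \in cA) || (a' \in cA) -> dedge a a' = dedge b b'.
Proof.
move=> small ab ab' /orP[] /(cover_pos_mem small) [l pos].
  have posb : cover_pos K cB b = Some l.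
    by rewrite -pos; exact: esym (congr1 (fun t => t.1.1.1) ab).
  by rewrite (dedge_from_pos a' pos) (dedge_from_pos b' posb) ab'.
have posb : cover_pos K cB b' = Some l.
  by rewrite -pos; exact: esym (congr1 (fun t => t.1.1.1) ab').
by rewrite (dedge_to_pos a pos) (dedge_to_pos b posb) ab.
Qed.

Lemma dedge_loop_vprofile K (A B : digraph) (cA : seq (vert A)) (cB : seq (vert B))
    (a : vert A) (b : vert B) :
  vprofile K cA a = vprofile K cB b -> dedge a a = dedge b b.
Proof. by move/(congr1 (fun t => t.1.1.2)). Qed.

Lemma vprofile_strong_hom K (A B : digraph) (cA : seq (vert A)) (cB : seq (vert B))
    (phi : vert B -> vert A) :
  vertex_cover cA -> vertex_cover cB -> size cA <= K -> size cB <= K ->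
  (forall b, vprofile K cA (phi b) = vprofile K cB b) -> is_strong_hom phi.
Proof.
move=> coverA coverB smallA smallB phiP.
split=> [b b' | _ _ [a <-] [a' <-] aa'].
  have [<- | neq] := eqVneq b b'.
    by move=> bb; rewrite (dedge_loop_vprofile (phiP b)).
  move=> bb'.
  by rewrite -(dedge_vprofile smallB (esym (phiP b)) (esym (phiP b'))) // coverB.
have [eq_phi | neq] := eqVneq (phi a) (phi a').
  by exists a, a; split=> //; rewrite -(dedge_loop_vprofile (phiP a)) {2}eq_phi.
exists a, a'; split=> //.
by rewrite -(dedge_vprofile smallA (phiP a) (phiP a')) // coverA.
Qed.

Lemma fiberwise_surjection (T : eqType) (X Y : finType) (tX : X -> T) (tY : Y -> T) :
  (forall y, exists x, tX x = tY y) ->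
  (forall t, #|[pred x | tX x == t]| <= #|[pred y | tY y == t]|) ->
  exists phi : Y -> X, (forall y, tX (phi y) = tY y) /\ surj phi.
Proof.
move=> inhabited le_card.
pose FX t := enum [pred x | tX x == t]; pose FY t := enum [pred y | tY y == t].
have default y : exists x, tX x == tY y by have [x <-] := inhabited y; exists x.
(* The i-th element of a fiber of [tY] goes to the i-th element of the same
   fiber of [tX], or to a fixed element of it if that fiber is shorter. *)
pose phi y := nth (xchoose (default y)) (FX (tY y)) (index y (FY (tY y))).
exists phi; split=> [y | x].
  rewrite /phi; case: (ltnP (index y (FY (tY y))) (size (FX (tY y)))) => [lt | ge].
    by have := mem_nth (xchoose (default y)) lt; rewrite mem_enum inE => /eqP.
  by rewrite nth_default //; apply/eqP; exact: (xchooseP (default y)).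
have x_fib : x \in FX (tX x) by rewrite mem_enum inE.
have lt_Y : index x (FX (tX x)) < size (FY (tX x)).
  by rewrite -cardE (leq_trans _ (le_card (tX x))) // cardE index_mem.
have y0 : Y by case: (FY (tX x)) lt_Y => [// | y0].
pose y := nth y0 (FY (tX x)) (index x (FX (tX x))).
have ty : tY y = tX x by apply/eqP; have := mem_nth y0 lt_Y; rewrite mem_enum inE.
exists y; rewrite /phi; move: (xchoose _) => x0.
by rewrite ty index_uniq ?enum_uniq // nth_index.
Qed.

Definition edges (D : digraph) := [set p : vert D * vert D | dedge p.1 p.2].

Section Epimorphism.
Variables (A B : digraph) (phi : vert B -> vert A).
Hypotheses (phi_hom : is_hom phi) (phi_surj : surj phi).

Let phi_onto a : exists b, phi b == a.
Proof. by have [b <-] := phi_surj a; exists b. Qed.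

Let psi a := xchoose (phi_onto a).

Let psiK : cancel psi phi.
Proof. by move=> a; apply/eqP; exact: (xchooseP (phi_onto a)). Qed.

Lemma epi_leq_dsize : dsize A <= dsize B.
Proof. by have := leq_card psi (can_inj psiK); rewrite !card_ord. Qed.

Lemma epi_eq_dsize_inj : dsize A = dsize B -> injective phi.
Proof.
move=> eq_size; have psi_bij : bijective psi.
  by apply: inj_card_bij (can_inj psiK) _; rewrite !card_ord eq_size.
exact/can_inj/(bij_can_sym psi_bij).
Qed.

Hypothesis phi_inj : injective phi.

Let edge_map (p : vert B * vert B) := (phi p.1, phi p.2).

Let edge_map_edges : edge_map @: edges B \subset edges A.
Proof.
by apply/subsetP=> _ /imsetP[p p_edge ->]; move: p_edge; rewrite !inE; apply: phi_hom.
Qed.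

Let card_edge_map : #|edge_map @: edges B| = #|edges B|.
Proof. by apply: card_imset => -[a b] [c d] [] /phi_inj -> /phi_inj ->. Qed.

Lemma epi_inj_leq_edges : #|edges B| <= #|edges A|.
Proof. by rewrite -card_edge_map subset_leq_card. Qed.

(* With as many edges in [A] as in [B], every edge of [A] comes from [B]. *)
Lemma epi_inj_eq_edges : #|edges B| = #|edges A| -> strong_hom_image_le B A.
Proof.
move=> eq_edges.
have all_edges : edge_map @: edges B = edges A.
  by apply/eqP; rewrite eqEcard edge_map_edges card_edge_map eq_edges /=.
have phiK : cancel phi psi by move=> b; apply: phi_inj; rewrite psiK.
exists psi; split; last by move=> b; exists (phi b).
split=> [a a' aa' | b b' _ _ bb'].
  have : (a, a') \in edge_map @: edges B by rewrite all_edges inE.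
  by case/imsetP=> -[b b']; rewrite inE => bb' [-> ->]; rewrite !phiK.
by exists (phi b), (phi b'); rewrite !phiK; split=> //; apply: phi_hom.
Qed.

End Epimorphism.

Definition hom_rank (D : digraph) := dsize D ^ 3 + (dsize D ^ 2 - #|edges D|).

Lemma edges_leq (D : digraph) : #|edges D| <= dsize D ^ 2.
Proof. by rewrite (leq_trans (max_card _)) // card_prod card_ord. Qed.

Lemma hom_rank_le (A B : digraph) : hom_image_le A B ->
  hom_rank A <= hom_rank B /\ (hom_rank A = hom_rank B -> strong_hom_image_le B A).
Proof.
case=> phi [phi_hom phi_surj]; have eA := edges_leq A; have eB := edges_leq B.
have [lt_size | ge_size] := ltnP (dsize A) (dsize B).
  have lt_rank : hom_rank A < hom_rank B.
    have : (dsize A).+1 ^ 3 <= dsize B ^ 3 by rewrite leq_exp2r.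
    rewrite /hom_rank; lia.
  by split=> [|eq_rank]; [exact: ltnW | rewrite eq_rank ltnn in lt_rank].
have eq_size : dsize A = dsize B by apply/eqP; rewrite eqn_leq (epi_leq_dsize phi_surj).
have phi_inj := epi_eq_dsize_inj phi_surj eq_size.
have le_edges := epi_inj_leq_edges phi_hom phi_inj.
split=> [|eq_rank]; first by rewrite /hom_rank; nia.
apply: (epi_inj_eq_edges phi_hom phi_surj phi_inj).
by move: eq_rank; rewrite /hom_rank; nia.
Qed.

Lemma strong_hom_image_le_of_counts K (A B : digraph)
    (cA : seq (vert A)) (cB : seq (vert B)) :
  vertex_cover cA -> vertex_cover cB -> size cA <= K -> size cB <= K ->
  (forall t : profile K, leq_nz (count_profile cA t) (count_profile cB t)) ->
  strong_hom_image_le A B.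
Proof.
move=> coverA coverB smallA smallB le_counts.
have inhabited b : exists a, vprofile K cA a = vprofile K cB b.
  have : 0 < count_profile cA (vprofile K cB b).
    by rewrite (le_counts _).2; apply/card_gt0P; exists b; rewrite inE.
  by case/card_gt0P=> a; rewrite inE => /eqP; exists a.
have [phi [phiP phi_surj]] :=
  fiberwise_surjection inhabited (fun t => (le_counts t).1).
by exists phi; split=> //; exact: vprofile_strong_hom coverA coverB smallA smallB phiP.
Qed.

Lemma bounded_strong_hom_image_good (C : digraph -> Prop) (N : nat) :
  (forall D, C D -> forall s : seq (vert D * vert D),
     disjoint_edge_set s -> size s <= N) ->
  forall f : nat -> digraph, (forall i, C (f i)) ->
  exists i j, i < j /\ strong_hom_image_le (f i) (f j).
Proof.
move=> bounded f Cf.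
have cover_ex i := vertex_cover_of_bounded_disjoint_edges (bounded _ (Cf i)).
pose c i := proj1_sig (constructive_indefinite_description _ (cover_ex i)).
have cP i : vertex_cover (c i) /\ size (c i) <= N.*2.
  by rewrite /c; case: constructive_indefinite_description.
pose counts i (t : profile N.*2) := count_profile (c i) t.
have [g [g_incr g_le]] :=
  chain_subseq_pointwise (T := profile N.*2) chain_subseq_leq_nz counts.
exists (g 0), (g 1); split; first exact: g_incr.
exact: strong_hom_image_le_of_counts (cP _).1 (cP _).1 (cP _).2 (cP _).2 (g_le 0 1 _).
Qed.

Lemma wqo_on_between (C : digraph -> Prop) (le : digraph -> digraph -> Prop) :
  (forall A B, strong_hom_image_le A B -> le A B) ->
  (forall A B, le A B -> hom_image_le A B) ->
  (forall f : nat -> digraph, (forall i, C (f i)) ->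
     exists i j, i < j /\ strong_hom_image_le (f i) (f j)) ->
  wqo_on C le.
Proof.
move=> strong_le le_hom good; split=> [[f [_ descent]] | [f [Cf antichain]]].
  have rank_lt i : hom_rank (f i.+1) < hom_rank (f i).
    have [le_next not_le] := descent i.
    have [le_rank eq_strong] := hom_rank_le (le_hom _ _ le_next).
    by rewrite ltn_neqAle le_rank andbT; apply/eqP => /eq_strong/strong_le.
  have rank_bound i : hom_rank (f i) + i <= hom_rank (f 0).
    by elim: i => [|i IH]; rewrite ?addn0 // addnS (leq_trans _ IH) ?ltn_add2r.
  by have := rank_bound (hom_rank (f 0)).+1; rewrite addnS ltnNge leq_addl.
have [i [j [lt_ij ij]]] := good f Cf.
apply: (antichain i j); last exact: strong_le.
by move=> eq_ij; rewrite eq_ij ltnn in lt_ij.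
Qed.

Theorem corollary2p7 (C : digraph -> Prop) (N : nat) :
  (forall D, C D -> forall s : seq (vert D * vert D),
     disjoint_edge_set s -> size s <= N) ->
  wqo_on C hom_image_le /\ wqo_on C strong_hom_image_le.
Proof.
move=> bounded; have good := bounded_strong_hom_image_good bounded.
have strong_hom A B : strong_hom_image_le A B -> hom_image_le A B.
  by case=> phi [[phi_hom _] phi_surj]; exists phi.
by split; apply: wqo_on_between.
Qed.
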